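(* Let $a,b,c$ be real polynomials of total degree at most $2$, $d,e$ of total degree at most $1$, $\Phi=\begin{pmatrix}a&b\\ b&c\end{pmatrix}$, $L[p]=ap_{xx}+2bp_{xy}+cp_{yy}+dp_x+ep_y$, and let $\omega$ be a nontrivial symmetry factor of $L$. Assume there exist $2\times2$ matrices $\Psi_0,\Psi_1$ with entries polynomials of total degree at most $1$ such that $(a\Phi)_x+(b\Phi)_y=\Phi\Psi_0$ and $(b\Phi)_x+(c\Phi)_y=\Phi\Psi_1$. Let $n\ge1$ and let $A_n$ be an arbitrary $(n+1)\times(m+1)$ matrix of polynomials. Then $$\operatorname{div}^{\{n\}}\big(\Phi^{\{n\}}A_n\,\omega\big)=\operatorname{div}^{\{n-1\}}\big(\Phi^{\{n-1\}}A_{n-1}\,\omega\big),$$ where $A_{n-1}$ is an $n\times(m+1)$ polynomial matrix satisfying $\deg A_{n-1}\le\deg A_n+1$.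
   Context: A symmetry factor of $L$ is a nontrivial $C^2$ function $\omega$ on an open set with $\omega L[f]=(a\omega f)_{xx}+2(b\omega f)_{xy}+(c\omega f)_{yy}-(d\omega f)_x-(e\omega f)_y$ for all smooth $f$. $\Phi^{\{n\}}=(\phi^{\{n\}}_{i,j})_{i,j=0}^n$ is the second kind Kronecker power: $z_1^{n-i}z_2^i=\sum_j\phi^{\{n\}}_{i,j}t_1^{n-j}t_2^j$ with $z_1=at_1+bt_2$, $z_2=bt_1+ct_2$; $\Phi^{\{0\}}=1$. For matrices $B_0,\dots,B_n$ of equal size $h\times k$, $\operatorname{div}^{\{n\}}(B_0,\dots,B_n)^t=\sum_{i=0}^n\binom ni\partial_x^{n-i}\partial_y^iB_i$, where an $((n+1)h)\times k$ matrix is read as the stack of its consecutive $h\times k$ blocks (here $h=1$, the blocks are rows); $\operatorname{div}^{\{0\}}$ is the identity. The degree of a polynomial matrix is the maximum total degree of its entries. *)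

From Stdlib Require Import Reals List.
From Coquelicot Require Import Hierarchy Continuity Derive.
Import ListNotations.
Open Scope R_scope.

Definition fn2 := R -> R -> R.

Definition px (f : fn2) : fn2 := fun x y => Derive (fun t => f t y) x.
Definition py (f : fn2) : fn2 := fun x y => Derive (fun t => f x t) y.

Fixpoint dword (w : list bool) (f : fn2) : fn2 :=
  match w with
  | nil => f
  | b :: w' => (if b then px else py) (dword w' f)
  end.

Definition Ck_on (k : nat) (U : R * R -> Prop) (f : fn2) : Prop :=
  forall (w : list bool) (x y : R), (length w <= k)%nat -> U (x, y) ->
    continuous (fun p : R * R => dword w f (fst p) (snd p)) (x, y) /\
    ((length w < k)%nat ->
       ex_derive (fun t => dword w f t y) x /\ ex_derive (fun t => dword w f x t) y).

Definition smooth_on (U : R * R -> Prop) (f : fn2) : Prop := forall k, Ck_on k U f.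

Definition is_poly_le (k : nat) (p : fn2) : Prop :=
  exists coef : nat -> nat -> R, forall x y,
    p x y = sum_f_R0 (fun i => sum_f_R0 (fun j => coef i j * x ^ i * y ^ j) (k - i)) k.

Definition fmul (f g : fn2) : fn2 := fun x y => f x y * g x y.

Definition Lop (a b c d e : fn2) (f : fn2) : fn2 := fun x y =>
  a x y * px (px f) x y + 2 * b x y * px (py f) x y + c x y * py (py f) x y
  + d x y * px f x y + e x y * py f x y.

Definition symmetry_factor (a b c d e : fn2) (U : R * R -> Prop) (omega : fn2) : Prop :=
  open U /\ Ck_on 2 U omega /\ (exists x y, U (x, y) /\ omega x y <> 0) /\
  forall f : fn2, smooth_on U f -> forall x y, U (x, y) ->
    omega x y * Lop a b c d e f x y =
      px (px (fmul a (fmul omega f))) x y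
      + 2 * px (py (fmul b (fmul omega f))) x y
      + py (py (fmul c (fmul omega f))) x y
      - px (fmul d (fmul omega f)) x y
      - py (fmul e (fmul omega f)) x y.

Definition Phi2 (a b c : fn2) (r s : nat) : fn2 :=
  match r, s with
  | O, O => a
  | S O, S O => c
  | _, _ => b
  end.

(* phi = Phi^{n} (second kind Kronecker power), characterized as in the paper:
   z1^(n-i) z2^i = sum_j phi_{i,j} t1^(n-j) t2^j with z1 = a t1 + b t2,
   z2 = b t1 + c t2, for all i <= n (pointwise in (x, y), identically in t1, t2). *)
Definition kron2_spec (a b c : fn2) (n : nat) (phi : nat -> nat -> fn2) : Prop :=
  forall (i : nat) (x y t1 t2 : R), (i <= n)%nat ->
    (a x y * t1 + b x y * t2) ^ (n - i) * (b x y * t1 + c x y * t2) ^ i =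
    sum_f_R0 (fun j => phi i j x y * t1 ^ (n - j) * t2 ^ j) n.

(* div^{n} of a column (B_0, ..., B_n) of scalar functions (h = 1):
   sum_i binom(n,i) d_x^{n-i} d_y^i B_i. Applied columnwise to matrices. *)
Definition divn (n : nat) (B : nat -> fn2) : fn2 := fun x y =>
  sum_f_R0 (fun i => Binomial.C n i * Nat.iter (n - i) px (Nat.iter i py (B i)) x y) n.

(* Entry (i, k) of the matrix Phi^{n} A omega, with Phi^{n} of size (n+1)x(n+1). *)
Definition matPAw (n : nat) (phi A : nat -> nat -> fn2) (omega : fn2) (i k : nat) : fn2 :=
  fun x y => sum_f_R0 (fun j => phi i j x y * A j k x y) n * omega x y.

From Stdlib Require Import Reals List Lia Lra FunctionalExtensionality.
From Coquelicot Require Import Rcomplements Hierarchy Continuity Derive Derive_2d AutoDerive.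
Import ListNotations.
Open Scope R_scope.

(* By Pascal's rule, div^{n} B = div^{n-1} C with C_i = (B_i)_x + (B_{i+1})_y, so for
   B = Phi^{n} A_n omega it suffices to write C_i as row i of Phi^{n-1} A_{n-1} omega.
   Since z1^{n-i} z2^i = z1 (z1^{n-1-i} z2^i) and z1^{n-1-i} z2^{i+1} = z2 (z1^{n-1-i} z2^i),
   rows i and i+1 of Phi^{n} are row i of Phi^{n-1} followed by multiplication by (a, b),
   resp. (b, c).  Expanding C_i by the product rule, the derivatives falling on omega are
   absorbed by (a omega)_x + (b omega)_y = d omega and (b omega)_x + (c omega)_y = e omega,
   obtained by testing the symmetry-factor identity against 1, x and y.  For the derivatives
   falling on Phi^{n-1}, the hypotheses on Psi0, Psi1 say al Phi_x + be Phi_y = Phi nu with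
   nu = Psi - (al_x + be_y) I for (al, be, Psi) = (a, b, Psi0) and (b, c, Psi1);
   differentiating the identity defining Phi^{n-1} then shows that al Phi^{n-1}_x +
   be Phi^{n-1}_y is Phi^{n-1} times the matrix of the derivative of binary forms along
   t |-> nu t, a tridiagonal matrix with entries of degree 1.  Collecting terms gives
   A_{n-1}; its degree is at most deg A_n + 1 because a, b, c have degree 2 and d, e, Psi
   have degree 1. *)

Definition fplus (f g : fn2) : fn2 := fun x y => f x y + g x y.

Lemma px_plus f g x y : ex_derive (fun t => f t y) x -> ex_derive (fun t => g t y) x ->
  px (fplus f g) x y = px f x y + px g x y.
Proof. intros. apply (Derive_plus (fun t => f t y) (fun t => g t y)); auto. Qed.

Lemma py_plus f g x y : ex_derive (fun t => f x t) y -> ex_derive (fun t => g x t) y ->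
  py (fplus f g) x y = py f x y + py g x y.
Proof. intros. apply (Derive_plus (fun t => f x t) (fun t => g x t)); auto. Qed.

Lemma px_mul f g x y : ex_derive (fun t => f t y) x -> ex_derive (fun t => g t y) x ->
  px (fmul f g) x y = px f x y * g x y + f x y * px g x y.
Proof. intros. apply (Derive_mult (fun t => f t y) (fun t => g t y)); auto. Qed.

Lemma py_mul f g x y : ex_derive (fun t => f x t) y -> ex_derive (fun t => g x t) y ->
  py (fmul f g) x y = py f x y * g x y + f x y * py g x y.
Proof. intros. apply (Derive_mult (fun t => f x t) (fun t => g x t)); auto. Qed.

Definition pdiff_at (f : fn2) (x y : R) : Prop :=
  ex_derive (fun t => f t y) x /\ ex_derive (fun t => f x t) y.

Lemma px_const c : px (fun _ _ => c) = (fun _ _ => 0).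
Proof. unfold px. do 2 (apply functional_extensionality; intro). apply Derive_const. Qed.

Lemma py_const c : py (fun _ _ => c) = (fun _ _ => 0).
Proof. unfold py. do 2 (apply functional_extensionality; intro). apply Derive_const. Qed.

Lemma is_derive_px f x y : ex_derive (fun t => f t y) x -> is_derive (fun t => f t y) x (px f x y).
Proof. apply Derive_correct. Qed.

Lemma is_derive_py f x y : ex_derive (fun t => f x t) y -> is_derive (fun t => f x t) y (py f x y).
Proof. apply Derive_correct. Qed.

Lemma is_derive_sum_f_R0 (f : nat -> R -> R) (df : nat -> R) N s :
  (forall j, (j <= N)%nat -> is_derive (f j) s (df j)) ->
  is_derive (fun s => sum_f_R0 (fun j => f j s) N) s (sum_f_R0 df N).
Proof.
  induction N as [|N IH]; intros H; simpl.
  - apply H; lia.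
  - apply (is_derive_plus (fun s => sum_f_R0 (fun j => f j s) N) (f (S N))); auto.
Qed.

Lemma px_sum N (f : nat -> fn2) x y : (forall j, (j <= N)%nat -> ex_derive (fun t => f j t y) x) ->
  px (fun x y => sum_f_R0 (fun j => f j x y) N) x y = sum_f_R0 (fun j => px (f j) x y) N.
Proof.
  intros H. apply is_derive_unique, (is_derive_sum_f_R0 (fun j t => f j t y)).
  intros j Hj. apply is_derive_px, H, Hj.
Qed.

Lemma py_sum N (f : nat -> fn2) x y : (forall j, (j <= N)%nat -> ex_derive (fun t => f j x t) y) ->
  py (fun x y => sum_f_R0 (fun j => f j x y) N) x y = sum_f_R0 (fun j => py (f j) x y) N.
Proof.
  intros H. apply is_derive_unique, (is_derive_sum_f_R0 (fun j t => f j x t)).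
  intros j Hj. apply is_derive_py, H, Hj.
Qed.

Lemma px_ext f g x y : (forall x y, f x y = g x y) -> px f x y = px g x y.
Proof. intros H. apply Derive_ext. auto. Qed.

Lemma py_ext f g x y : (forall x y, f x y = g x y) -> py f x y = py g x y.
Proof. intros H. apply Derive_ext. auto. Qed.

Lemma pdiff_at_plus f g x y : pdiff_at f x y -> pdiff_at g x y -> pdiff_at (fplus f g) x y.
Proof.
  intros [Fx Fy] [Gx Gy]. split;
    [apply (ex_derive_plus (fun t => f t y) (fun t => g t y))
    |apply (ex_derive_plus (fun t => f x t) (fun t => g x t))]; auto.
Qed.

Lemma pdiff_at_mul f g x y : pdiff_at f x y -> pdiff_at g x y -> pdiff_at (fmul f g) x y.
Proof.
  intros [Fx Fy] [Gx Gy]. split;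
    [apply (ex_derive_mult (fun t => f t y) (fun t => g t y))
    |apply (ex_derive_mult (fun t => f x t) (fun t => g x t))]; auto.
Qed.

Lemma div_sum_mul N (p G H : nat -> fn2) x y :
  (forall j, (j <= N)%nat -> pdiff_at (p j) x y /\ pdiff_at (G j) x y /\ pdiff_at (H j) x y) ->
  px (fun x y => sum_f_R0 (fun j => p j x y * G j x y) N) x y
  + py (fun x y => sum_f_R0 (fun j => p j x y * H j x y) N) x y =
  sum_f_R0 (fun j => px (p j) x y * G j x y + py (p j) x y * H j x y
                     + p j x y * (px (G j) x y + py (H j) x y)) N.
Proof.
  intros D.
  rewrite (px_sum N (fun j => fmul (p j) (G j))), (py_sum N (fun j => fmul (p j) (H j))).
  2:{ intros j Hj. destruct (D j Hj) as (Dp & _ & DH). exact (proj2 (pdiff_at_mul _ _ x y Dp DH)). }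
  2:{ intros j Hj. destruct (D j Hj) as (Dp & DG & _). exact (proj1 (pdiff_at_mul _ _ x y Dp DG)). }
  rewrite <- sum_plus. apply sum_eq. intros j Hj.
  destruct (D j Hj) as ([Dpx Dpy] & [DGx DGy] & [DHx DHy]).
  rewrite px_mul, py_mul by assumption. ring.
Qed.

Lemma div_weighted_pair (a b c u v w : fn2) x y :
  pdiff_at a x y -> pdiff_at b x y -> pdiff_at c x y ->
  pdiff_at u x y -> pdiff_at v x y -> pdiff_at w x y ->
  px (fun x y => (a x y * u x y + b x y * v x y) * w x y) x y
  + py (fun x y => (b x y * u x y + c x y * v x y) * w x y) x y =
  u x y * (px (fmul a w) x y + py (fmul b w) x y)
  + v x y * (px (fmul b w) x y + py (fmul c w) x y)
  + w x y * (a x y * px u x y + b x y * px v x y + b x y * py u x y + c x y * py v x y).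
Proof.
  intros [Ax Ay] [Bx By] [Cx Cy] [Ux Uy] [Vx Vy] [Wx Wy].
  rewrite !px_mul, !py_mul by assumption.
  assert (Ex : px (fun x y => (a x y * u x y + b x y * v x y) * w x y) x y =
    (px a x y * u x y + a x y * px u x y + px b x y * v x y + b x y * px v x y) * w x y
    + (a x y * u x y + b x y * v x y) * px w x y).
  { apply is_derive_unique. auto_derive; [repeat split; assumption|unfold px; ring]. }
  assert (Ey : py (fun x y => (b x y * u x y + c x y * v x y) * w x y) x y =
    (py b x y * u x y + b x y * py u x y + py c x y * v x y + c x y * py v x y) * w x y
    + (b x y * u x y + c x y * v x y) * py w x y).
  { apply is_derive_unique. auto_derive; [repeat split; assumption|unfold py; ring]. }
  rewrite Ex, Ey. ring.
Qed.

Lemma dword_cat w1 w2 f : dword (w1 ++ w2) f = dword w1 (dword w2 f).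
Proof. induction w1 as [|b w IH]; simpl; congruence. Qed.

Lemma iter_px_dword k f : Nat.iter k px f = dword (repeat true k) f.
Proof. induction k as [|k IH]; simpl; congruence. Qed.

Lemma iter_py_dword k f : Nat.iter k py f = dword (repeat false k) f.
Proof. induction k as [|k IH]; simpl; congruence. Qed.

Section OpenSet.

Variable U : R * R -> Prop.
Hypothesis HU : open U.

Lemma locally_x x y : U (x, y) -> locally x (fun t => U (t, y)).
Proof.
  intros Hxy. apply (locally_2d_1d_const_y (fun u v => U (u, v))).
  apply locally_2d_locally. generalize (HU _ Hxy). apply filter_imp. now intros [u v].
Qed.

Lemma locally_y x y : U (x, y) -> locally y (fun t => U (x, t)).
Proof.
  intros Hxy. apply (locally_2d_1d_const_x (fun u v => U (u, v))).
  apply locally_2d_locally. generalize (HU _ Hxy). apply filter_imp. now intros [u v].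
Qed.

Lemma dword_ext_on f g : (forall x y, U (x, y) -> f x y = g x y) ->
  forall w x y, U (x, y) -> dword w f x y = dword w g x y.
Proof.
  intros Hfg w. induction w as [|[|] w IH]; intros x y Hxy; simpl; auto;
    apply Derive_ext_loc.
  - generalize (locally_x x y Hxy). apply filter_imp. auto.
  - generalize (locally_y x y Hxy). apply filter_imp. auto.
Qed.

Lemma px_ext_on f g x y : (forall x y, U (x, y) -> f x y = g x y) -> U (x, y) ->
  px f x y = px g x y.
Proof. intros Hfg. exact (dword_ext_on f g Hfg [true] x y). Qed.

Lemma py_ext_on f g x y : (forall x y, U (x, y) -> f x y = g x y) -> U (x, y) ->
  py f x y = py g x y.
Proof. intros Hfg. exact (dword_ext_on f g Hfg [false] x y). Qed.

End OpenSet.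

Definition diff_on (U : R * R -> Prop) (f : fn2) : Prop :=
  forall x y, U (x, y) -> continuous (fun p : R * R => f (fst p) (snd p)) (x, y) /\ pdiff_at f x y.

Lemma Ck_on_S k U f :
  Ck_on (S k) U f <-> diff_on U f /\ Ck_on k U (px f) /\ Ck_on k U (py f).
Proof.
  split.
  - intros H. split; [|split].
    + intros x y Hxy. destruct (H nil x y) as [Hc Hd]; simpl; auto; try lia.
      split; auto. apply Hd. simpl; lia.
    + intros w x y Hw Hxy. rewrite <- (dword_cat w [true]).
      destruct (H (w ++ [true]) x y) as [Hc Hd]; auto; rewrite ?length_app; simpl; try lia.
      split; auto. intros. apply Hd. rewrite length_app; simpl; lia.
    + intros w x y Hw Hxy. rewrite <- (dword_cat w [false]).
      destruct (H (w ++ [false]) x y) as [Hc Hd]; auto; rewrite ?length_app; simpl; try lia.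
      split; auto. intros. apply Hd. rewrite length_app; simpl; lia.
  - intros [H0 [Hx Hy]] w x y Hw Hxy.
    destruct w as [|b w] using rev_ind.
    + destruct (H0 x y Hxy) as [Hc Hd]; simpl; auto.
    + rewrite dword_cat. rewrite length_app in Hw; simpl in Hw.
      destruct b; [destruct (Hx w x y) as [Hc Hd] | destruct (Hy w x y) as [Hc Hd]];
        auto; try lia; split; auto; intros Hl; apply Hd; rewrite length_app in Hl; simpl in Hl; lia.
Qed.

Lemma Ck_on_0 U f : Ck_on 0 U f <->
  forall x y, U (x, y) -> continuous (fun p : R * R => f (fst p) (snd p)) (x, y).
Proof.
  split.
  - intros H x y Hxy. apply (H nil); simpl; auto.
  - intros H [|b w] x y Hw Hxy; simpl in Hw; try lia. split; auto. simpl; lia.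
Qed.

Lemma Ck_on_px k U f : Ck_on (S k) U f -> Ck_on k U (px f).
Proof. intros H. apply Ck_on_S in H. apply H. Qed.

Lemma Ck_on_py k U f : Ck_on (S k) U f -> Ck_on k U (py f).
Proof. intros H. apply Ck_on_S in H. apply H. Qed.

Lemma Ck_on_le k l U f : (l <= k)%nat -> Ck_on k U f -> Ck_on l U f.
Proof. intros Hlk H w x y Hw Hxy. split; [apply H|intros; apply H]; auto; lia. Qed.

Lemma Ck_on_partials k U f x y : Ck_on (S k) U f -> U (x, y) -> pdiff_at f x y.
Proof. intros H Hxy. apply Ck_on_S in H. exact (proj2 (proj1 H x y Hxy)). Qed.

Section SmoothOnOpen.

Variable U : R * R -> Prop.
Hypothesis HU : open U.

Lemma Ck_on_ext k f g : (forall x y, U (x, y) -> f x y = g x y) ->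
  Ck_on k U f -> Ck_on k U g.
Proof.
  intros Hfg H w x y Hw Hxy. destruct (H w x y Hw Hxy) as [Hc Hd]. split.
  - apply (continuous_ext_loc _ (fun p : R * R => dword w f (fst p) (snd p))); auto.
    generalize (HU _ Hxy). apply filter_imp. intros [u v] Huv.
    apply (dword_ext_on U HU f g Hfg); auto.
  - intros Hl. destruct (Hd Hl) as [Dx Dy]. split.
    + apply (ex_derive_ext_loc (fun t => dword w f t y)); auto.
      generalize (locally_x U HU x y Hxy). apply filter_imp. intros t Ht.
      apply (dword_ext_on U HU f g Hfg); auto.
    + apply (ex_derive_ext_loc (fun t => dword w f x t)); auto.
      generalize (locally_y U HU x y Hxy). apply filter_imp. intros t Ht.
      apply (dword_ext_on U HU f g Hfg); auto.
Qed.

Lemma Ck_on_plus k f g : Ck_on k U f -> Ck_on k U g -> Ck_on k U (fplus f g).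
Proof.
  revert f g. induction k as [|k IH]; intros f g Hf Hg.
  - rewrite Ck_on_0 in Hf, Hg |- *. intros x y Hxy.
    apply (continuous_plus (fun p : R * R => f (fst p) (snd p))
                           (fun p : R * R => g (fst p) (snd p))); auto.
  - apply Ck_on_S in Hf as [Hf [Hfx Hfy]]. apply Ck_on_S in Hg as [Hg [Hgx Hgy]].
    apply Ck_on_S. split; [|split].
    + intros x y Hxy. destruct (Hf x y Hxy) as [Fc [Fx Fy]].
      destruct (Hg x y Hxy) as [Gc [Gx Gy]]. split; [|split].
      * apply (continuous_plus (fun p : R * R => f (fst p) (snd p))
                               (fun p : R * R => g (fst p) (snd p))); auto.
      * apply (ex_derive_plus (fun t => f t y) (fun t => g t y)); auto.
      * apply (ex_derive_plus (fun t => f x t) (fun t => g x t)); auto.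
    + apply (Ck_on_ext k (fplus (px f) (px g))); auto.
      intros x y Hxy. destruct (Hf x y Hxy) as [_ [Fx _]].
      destruct (Hg x y Hxy) as [_ [Gx _]]. symmetry. apply px_plus; auto.
    + apply (Ck_on_ext k (fplus (py f) (py g))); auto.
      intros x y Hxy. destruct (Hf x y Hxy) as [_ [_ Fy]].
      destruct (Hg x y Hxy) as [_ [_ Gy]]. symmetry. apply py_plus; auto.
Qed.

Lemma Ck_on_mul k f g : Ck_on k U f -> Ck_on k U g -> Ck_on k U (fmul f g).
Proof.
  revert f g. induction k as [|k IH]; intros f g Hf Hg.
  - rewrite Ck_on_0 in Hf, Hg |- *. intros x y Hxy.
    apply (continuous_mult (fun p : R * R => f (fst p) (snd p))
                           (fun p : R * R => g (fst p) (snd p))); auto.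
  - pose proof (Ck_on_le (S k) k U f ltac:(lia) Hf) as Hf'.
    pose proof (Ck_on_le (S k) k U g ltac:(lia) Hg) as Hg'.
    apply Ck_on_S in Hf as [Hf [Hfx Hfy]]. apply Ck_on_S in Hg as [Hg [Hgx Hgy]].
    apply Ck_on_S. split; [|split].
    + intros x y Hxy. destruct (Hf x y Hxy) as [Fc [Fx Fy]].
      destruct (Hg x y Hxy) as [Gc [Gx Gy]]. split; [|split].
      * apply (continuous_mult (fun p : R * R => f (fst p) (snd p))
                               (fun p : R * R => g (fst p) (snd p))); auto.
      * apply (ex_derive_mult (fun t => f t y) (fun t => g t y)); auto.
      * apply (ex_derive_mult (fun t => f x t) (fun t => g x t)); auto.
    + apply (Ck_on_ext k (fplus (fmul (px f) g) (fmul f (px g)))).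
      * intros x y Hxy. destruct (Hf x y Hxy) as [_ [Fx _]].
        destruct (Hg x y Hxy) as [_ [Gx _]]. symmetry. apply px_mul; auto.
      * apply Ck_on_plus; auto.
    + apply (Ck_on_ext k (fplus (fmul (py f) g) (fmul f (py g)))).
      * intros x y Hxy. destruct (Hf x y Hxy) as [_ [_ Fy]].
        destruct (Hg x y Hxy) as [_ [_ Gy]]. symmetry. apply py_mul; auto.
      * apply Ck_on_plus; auto.
Qed.

Lemma Ck_on_sum k N (f : nat -> fn2) : (forall j, (j <= N)%nat -> Ck_on k U (f j)) ->
  Ck_on k U (fun x y => sum_f_R0 (fun j => f j x y) N).
Proof.
  induction N as [|N IH]; intros H; simpl.
  - apply H; lia.
  - apply (Ck_on_plus k (fun x y => sum_f_R0 (fun j => f j x y) N) (f (S N))); auto.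
Qed.

Lemma Schwarz_on f x y : Ck_on 2 U f -> U (x, y) -> px (py f) x y = py (px f) x y.
Proof.
  intros Hf Hxy. apply Schwarz.
  - apply locally_2d_locally. generalize (HU _ Hxy). apply filter_imp. intros [u v] Huv.
    destruct (Hf nil u v) as [_ E0]; simpl; auto.
    destruct (Hf [false] u v) as [_ E1]; simpl; auto.
    destruct (Hf [true] u v) as [_ E2]; simpl; auto.
    destruct (E0 ltac:(simpl; lia)) as [A1 A2].
    destruct (E1 ltac:(simpl; lia)) as [B1 _].
    destruct (E2 ltac:(simpl; lia)) as [_ C2].
    repeat split; assumption.
  - apply continuity_2d_pt_filterlim. apply (Hf [true; false]); simpl; auto.
  - apply continuity_2d_pt_filterlim. apply (Hf [false; true]); simpl; auto.
Qed.

End SmoothOnOpen.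

(** * Pascal's rule for div^{n} *)

Section IteratedPartials.

Variable U : R * R -> Prop.
Hypothesis HU : open U.

Lemma Ck_on_iter_py i k f : Ck_on (i + k) U f -> Ck_on k U (Nat.iter i py f).
Proof.
  revert k. induction i as [|i IH]; intros k H; simpl; auto.
  apply Ck_on_py, IH. now rewrite Nat.add_succ_r.
Qed.

Lemma iter_py_px_comm i f : Ck_on (S i) U f ->
  forall x y, U (x, y) -> Nat.iter i py (px f) x y = px (Nat.iter i py f) x y.
Proof.
  induction i as [|i IH]; intros Hf x y Hxy; simpl; auto.
  transitivity (py (px (Nat.iter i py f)) x y).
  - apply (py_ext_on U HU); auto. intros u v Huv. apply IH; auto.
    apply (Ck_on_le (S (S i))); auto.
  - symmetry. apply (Schwarz_on U HU); auto. apply Ck_on_iter_py.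
    now rewrite Nat.add_comm.
Qed.

Lemma dword_plus_on k f g : Ck_on k U f -> Ck_on k U g ->
  forall w, (length w <= k)%nat -> forall x y, U (x, y) ->
  dword w (fplus f g) x y = dword w f x y + dword w g x y.
Proof.
  intros Hf Hg w. induction w as [|b w IH]; intros Hw x y Hxy; simpl; auto.
  simpl in Hw.
  destruct (Hf w x y ltac:(lia) Hxy) as [_ Ef]. destruct (Ef ltac:(lia)) as [Fx Fy].
  destruct (Hg w x y ltac:(lia) Hxy) as [_ Eg]. destruct (Eg ltac:(lia)) as [Gx Gy].
  destruct b.
  - rewrite <- (px_plus (dword w f) (dword w g)) by auto.
    apply (px_ext_on U HU); auto. intros u v Huv. apply IH; auto; lia.
  - rewrite <- (py_plus (dword w f) (dword w g)) by auto.
    apply (py_ext_on U HU); auto. intros u v Huv. apply IH; auto; lia.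
Qed.

End IteratedPartials.

Lemma sum_binomial_pascal N (T : nat -> R) :
  sum_f_R0 (fun i => Binomial.C N i * (T i + T (S i))) N =
  sum_f_R0 (fun i => Binomial.C (S N) i * T i) (S N).
Proof.
  destruct N as [|M].
  - simpl. rewrite !C_n_0, (C_n_n 1). ring.
  - rewrite (decomp_sum (fun i => Binomial.C (S (S M)) i * T i) (S (S M))) by lia.
    simpl Nat.pred. rewrite (tech5 (fun i => Binomial.C (S (S M)) (S i) * T (S i))).
    rewrite (sum_eq (fun i => Binomial.C (S (S M)) (S i) * T (S i))
      (fun i => Binomial.C (S M) i * T (S i) + Binomial.C (S M) (S i) * T (S i))).
    2:{ intros i Hi. rewrite <- (pascal (S M) i) by lia. ring. }
    rewrite sum_plus.
    rewrite (sum_eq _ (fun i => Binomial.C (S M) i * T i + Binomial.C (S M) i * T (S i)))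
      by (intros; ring).
    rewrite sum_plus, (decomp_sum (fun i => Binomial.C (S M) i * T i) (S M)) by lia.
    simpl Nat.pred. rewrite (tech5 (fun i => Binomial.C (S M) i * T (S i))).
    rewrite !C_n_0, !C_n_n. ring.
Qed.

Lemma divn_succ N U (B C : nat -> fn2) : open U ->
  (forall i, (i <= S N)%nat -> Ck_on (S N) U (B i)) ->
  (forall i x y, (i <= N)%nat -> U (x, y) -> C i x y = px (B i) x y + py (B (S i)) x y) ->
  forall x y, U (x, y) -> divn (S N) B x y = divn N C x y.
Proof.
  intros HU HB HC x y Hxy. unfold divn.
  rewrite <- (sum_binomial_pascal N (fun j => Nat.iter (S N - j) px (Nat.iter j py (B j)) x y)).
  apply sum_eq. intros i Hi. apply Rmult_eq_compat_l. symmetry.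
  assert (HBi : Ck_on N U (px (B i))) by (apply Ck_on_px, HB; lia).
  assert (HBSi : Ck_on N U (py (B (S i)))) by (apply Ck_on_py, HB; lia).
  rewrite !iter_px_dword, !iter_py_dword, <- !dword_cat.
  rewrite (dword_ext_on U HU (C i) (fplus (px (B i)) (py (B (S i)))));
    [|intros u v Huv; apply HC; auto|exact Hxy].
  rewrite (dword_plus_on U HU N _ _ HBi HBSi); [|rewrite length_app, !repeat_length; lia|exact Hxy].
  rewrite !dword_cat, <- !iter_px_dword, <- !iter_py_dword.
  replace (S N - S i)%nat with (N - i)%nat by lia. rewrite (Nat.iter_succ_r i fn2 py).
  apply Rplus_eq_compat_r.
  rewrite (Nat.sub_succ_l i N Hi), Nat.iter_succ_r, !iter_px_dword.
  apply (dword_ext_on U HU); [|exact Hxy]. intros u v Huv.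
  apply (iter_py_px_comm U HU); auto. apply (Ck_on_le (S N)); [lia|]. apply HB; lia.
Qed.

(** * Polynomials *)

Definition monomial := (R * nat * nat)%type.

Definition mon_deg (m : monomial) : nat := match m with (_, i, j) => (i + j)%nat end.

Definition mon_eval (m : monomial) (x y : R) : R :=
  match m with (c, i, j) => c * x ^ i * y ^ j end.

Fixpoint poly_eval (l : list monomial) (x y : R) : R :=
  match l with nil => 0 | m :: l' => mon_eval m x y + poly_eval l' x y end.

Definition poly_le (k : nat) (f : fn2) : Prop :=
  exists l, List.Forall (fun m => (mon_deg m <= k)%nat) l /\ forall x y, f x y = poly_eval l x y.

Definition is_poly (f : fn2) : Prop := exists k, poly_le k f.

Lemma poly_eval_app l1 l2 x y : poly_eval (l1 ++ l2) x y = poly_eval l1 x y + poly_eval l2 x y.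
Proof. induction l1 as [|m l IH]; simpl; [ring|]. rewrite IH; ring. Qed.

Definition mon_mul (m1 m2 : monomial) : monomial :=
  match m1, m2 with (c1, i1, j1), (c2, i2, j2) => (c1 * c2, (i1 + i2)%nat, (j1 + j2)%nat) end.

Definition poly_mul (l1 l2 : list monomial) : list monomial :=
  flat_map (fun m => map (mon_mul m) l2) l1.

Lemma poly_eval_map_mul m l x y :
  poly_eval (map (mon_mul m) l) x y = mon_eval m x y * poly_eval l x y.
Proof.
  destruct m as [[c1 i1] j1]. induction l as [|[[c2 i2] j2] l IH]; simpl; [ring|].
  rewrite IH, !pow_add. simpl. ring.
Qed.

Lemma poly_eval_mul l1 l2 x y :
  poly_eval (poly_mul l1 l2) x y = poly_eval l1 x y * poly_eval l2 x y.
Proof.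
  induction l1 as [|m1 l1 IH]; simpl; [ring|].
  unfold poly_mul in *; simpl. rewrite poly_eval_app, IH, poly_eval_map_mul. ring.
Qed.

Lemma poly_le_ext k f g : (forall x y, f x y = g x y) -> poly_le k f -> poly_le k g.
Proof. intros Hfg [l [Hl E]]. exists l. split; auto. intros. rewrite <- Hfg; auto. Qed.

Lemma poly_le_const k c : poly_le k (fun _ _ => c).
Proof.
  exists [(c, 0, 0)%nat]. split; [repeat constructor; simpl; lia|]. intros; simpl; ring.
Qed.

Lemma poly_le_plus k f g : poly_le k f -> poly_le k g -> poly_le k (fplus f g).
Proof.
  intros [l1 [H1 E1]] [l2 [H2 E2]]. exists (l1 ++ l2). split.
  - apply Forall_app; auto.
  - intros. unfold fplus. rewrite poly_eval_app, E1, E2; auto.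
Qed.

Lemma poly_le_mul k1 k2 k f g : (k1 + k2 <= k)%nat ->
  poly_le k1 f -> poly_le k2 g -> poly_le k (fmul f g).
Proof.
  intros Hk [l1 [H1 E1]] [l2 [H2 E2]]. exists (poly_mul l1 l2). split.
  - apply Forall_flat_map. rewrite Forall_forall in *. intros [[c1 i1] j1] Hm1.
    apply Forall_map. rewrite Forall_forall. intros [[c2 i2] j2] Hm2.
    specialize (H1 _ Hm1). specialize (H2 _ Hm2). simpl in *. lia.
  - intros. unfold fmul. rewrite poly_eval_mul, E1, E2; auto.
Qed.

Lemma poly_le_sum k N (f : nat -> fn2) : (forall j, (j <= N)%nat -> poly_le k (f j)) ->
  poly_le k (fun x y => sum_f_R0 (fun j => f j x y) N).
Proof.
  induction N as [|N IH]; intros H; simpl.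
  - apply H; lia.
  - apply (poly_le_plus k (fun x y => sum_f_R0 (fun j => f j x y) N) (f (S N))); auto.
Qed.

Definition mon_dx (m : monomial) : list monomial :=
  match m with (_, O, _) => nil | (c, S i, j) => [(c * INR (S i), i, j)] end.

Definition mon_dy (m : monomial) : list monomial :=
  match m with (_, _, O) => nil | (c, i, S j) => [(c * INR (S j), i, j)] end.

Lemma is_derive_poly_eval_x l x y :
  is_derive (fun t => poly_eval l t y) x (poly_eval (flat_map mon_dx l) x y).
Proof.
  induction l as [|[[c [|i]] j] l IH]; simpl.
  - apply (is_derive_const 0).
  - rewrite <- (Rplus_0_l (poly_eval _ x y)).
    apply (is_derive_plus (fun t => c * 1 * y ^ j) (fun t => poly_eval l t y)); auto.
    exact (is_derive_const (c * 1 * y ^ j) x).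
  - apply (is_derive_plus (fun t => c * (t * t ^ i) * y ^ j) (fun t => poly_eval l t y)); auto.
    auto_derive; auto. destruct i; [simpl; ring|cbn [pred pow]; ring].
Qed.

Lemma is_derive_poly_eval_y l x y :
  is_derive (fun t => poly_eval l x t) y (poly_eval (flat_map mon_dy l) x y).
Proof.
  induction l as [|[[c i] [|j]] l IH]; simpl.
  - apply (is_derive_const 0).
  - rewrite <- (Rplus_0_l (poly_eval _ x y)).
    apply (is_derive_plus (fun t => c * x ^ i * 1) (fun t => poly_eval l x t)); auto.
    exact (is_derive_const (c * x ^ i * 1) y).
  - apply (is_derive_plus (fun t => c * x ^ i * (t * t ^ j)) (fun t => poly_eval l x t)); auto.
    auto_derive; auto. destruct j; [simpl; ring|cbn [pred pow]; ring].
Qed.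

Lemma poly_le_px k f : poly_le k f -> poly_le (pred k) (px f).
Proof.
  intros [l [Hl E]]. exists (flat_map mon_dx l). split.
  - apply Forall_flat_map. eapply Forall_impl; [|exact Hl].
    intros [[c [|i]] j]; simpl; intros; repeat constructor; simpl; lia.
  - intros x y. unfold px. rewrite (Derive_ext _ (fun t => poly_eval l t y)) by auto.
    apply is_derive_unique, is_derive_poly_eval_x.
Qed.

Lemma poly_le_py k f : poly_le k f -> poly_le (pred k) (py f).
Proof.
  intros [l [Hl E]]. exists (flat_map mon_dy l). split.
  - apply Forall_flat_map. eapply Forall_impl; [|exact Hl].
    intros [[c i] [|j]]; simpl; intros; repeat constructor; simpl; lia.
  - intros x y. unfold py. rewrite (Derive_ext _ (fun t => poly_eval l x t)) by auto.
    apply is_derive_unique, is_derive_poly_eval_y.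
Qed.

Lemma is_poly_ex_derive_x f x y : is_poly f -> ex_derive (fun t => f t y) x.
Proof.
  intros [k [l [_ E]]]. apply (ex_derive_ext (fun t => poly_eval l t y)); auto.
  eexists. apply is_derive_poly_eval_x.
Qed.

Lemma is_poly_ex_derive_y f x y : is_poly f -> ex_derive (fun t => f x t) y.
Proof.
  intros [k [l [_ E]]]. apply (ex_derive_ext (fun t => poly_eval l x t)); auto.
  eexists. apply is_derive_poly_eval_y.
Qed.

Lemma is_poly_pdiff_at f x y : is_poly f -> pdiff_at f x y.
Proof. split; [apply is_poly_ex_derive_x|apply is_poly_ex_derive_y]; auto. Qed.

Lemma continuous_poly_eval l p : continuous (fun p : R * R => poly_eval l (fst p) (snd p)) p.
Proof.
  assert (Hpow : forall (g : R * R -> R) i, continuous g p -> continuous (fun p => g p ^ i) p).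
  { intros g i Hg. induction i as [|i IH]; simpl.
    - apply continuous_const.
    - apply (continuous_mult g (fun p => g p ^ i)); auto. }
  induction l as [|[[c i] j] l IH]; simpl.
  - apply continuous_const.
  - apply (continuous_plus (fun p : R * R => c * fst p ^ i * snd p ^ j)); auto.
    apply (continuous_mult (fun p : R * R => c * fst p ^ i)).
    + apply (continuous_mult (fun _ => c)); [apply continuous_const|].
      apply (Hpow fst), continuous_fst.
    + apply (Hpow snd), continuous_snd.
Qed.

Lemma continuous_is_poly f p : is_poly f -> continuous (fun p : R * R => f (fst p) (snd p)) p.
Proof.
  intros [k [l [_ E]]]. apply (continuous_ext (fun p : R * R => poly_eval l (fst p) (snd p))).
  - intros; now rewrite E.
  - apply continuous_poly_eval.
Qed.

Lemma Ck_on_poly k U f : is_poly f -> Ck_on k U f.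
Proof.
  revert f. induction k as [|k IH]; intros f [d Hf].
  - apply Ck_on_0. intros x y _. apply continuous_is_poly. now exists d.
  - apply Ck_on_S. split; [|split].
    + intros x y _. split; [apply continuous_is_poly|apply is_poly_pdiff_at]; now exists d.
    + apply IH. exists (pred d). now apply poly_le_px.
    + apply IH. exists (pred d). now apply poly_le_py.
Qed.

Definition delta (k l : nat) : R := if Nat.eqb k l then 1 else 0.

Lemma sum_delta M k (w : nat -> R) :
  sum_f_R0 (fun l => delta k l * w l) M = if Nat.leb k M then w k else 0.
Proof.
  induction M as [|M IH]; simpl.
  - unfold delta. destruct k; simpl; ring.
  - rewrite IH. unfold delta.
    destruct (Nat.leb_spec k M), (Nat.eqb_spec k (S M)), (Nat.leb_spec k (S M));
      try lia; subst; ring.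
Qed.

Lemma sum_zero N : sum_f_R0 (fun _ => 0) N = 0.
Proof. induction N as [|N IH]; simpl; auto. rewrite IH; ring. Qed.

Lemma poly_le_of_is_poly_le k f : is_poly_le k f -> poly_le k f.
Proof.
  intros [coef E]. apply (poly_le_ext k (fun x y =>
    sum_f_R0 (fun i => sum_f_R0 (fun j => coef i j * x ^ i * y ^ j) (k - i)) k)).
  { intros; now rewrite E. }
  apply poly_le_sum. intros i Hi. apply poly_le_sum. intros j Hj.
  exists [(coef i j, i, j)]. split; [repeat constructor; simpl; lia|]. intros; simpl; ring.
Qed.

Lemma is_poly_le_of_poly_le k f : poly_le k f -> is_poly_le k f.
Proof.
  intros [l [Hl E]]. cut (exists coef : nat -> nat -> R, forall x y,
    poly_eval l x y = sum_f_R0 (fun i => sum_f_R0 (fun j => coef i j * x ^ i * y ^ j) (k - i)) k).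
  { intros [coef Hc]. exists coef. intros; rewrite E; auto. }
  clear E. induction Hl as [|[[c i0] j0] l Hm Hl IH].
  - exists (fun _ _ => 0). intros; simpl.
    rewrite <- (sum_zero k) at 1. apply sum_eq. intros i _.
    rewrite <- (sum_zero (k - i)) at 1. apply sum_eq. intros; ring.
  - destruct IH as [coef Hc]. simpl in Hm.
    exists (fun i j => coef i j + c * delta i0 i * delta j0 j). intros x y. simpl. rewrite Hc.
    rewrite (sum_eq (fun i => sum_f_R0 (fun j =>
        (coef i j + c * delta i0 i * delta j0 j) * x ^ i * y ^ j) (k - i))
      (fun i => sum_f_R0 (fun j => coef i j * x ^ i * y ^ j) (k - i) +
        delta i0 i * (c * x ^ i * sum_f_R0 (fun j => delta j0 j * y ^ j) (k - i)))).
    2:{ intros i _. rewrite (scal_sum _ _ (c * x ^ i)), scal_sum, <- sum_plus.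
        apply sum_eq. intros; ring. }
    rewrite sum_plus, sum_delta.
    destruct (Nat.leb_spec i0 k); [|lia]. rewrite sum_delta.
    destruct (Nat.leb_spec j0 (k - i0)); [|lia]. ring.
Qed.

Lemma px_poly_le_0 f x y : poly_le 0 f -> px f x y = 0.
Proof.
  intros [l [Hl E]]. unfold px. rewrite (Derive_ext _ (fun t => poly_eval l t y)) by auto.
  apply is_derive_unique. replace 0 with (poly_eval (flat_map mon_dx l) x y);
    [apply is_derive_poly_eval_x|].
  clear E. induction Hl as [|[[c [|i]] j] l Hm Hl IH]; simpl in *; auto; lia.
Qed.

Lemma py_poly_le_0 f x y : poly_le 0 f -> py f x y = 0.
Proof.
  intros [l [Hl E]]. unfold py. rewrite (Derive_ext _ (fun t => poly_eval l x t)) by auto.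
  apply is_derive_unique. replace 0 with (poly_eval (flat_map mon_dy l) x y);
    [apply is_derive_poly_eval_y|].
  clear E. induction Hl as [|[[c i] [|j]] l Hm Hl IH]; simpl in *; auto; lia.
Qed.

Lemma poly_le_mul_px D f g : poly_le 2 f -> poly_le D g ->
  poly_le (D + 1) (fun x y => f x y * px g x y).
Proof.
  intros Hf Hg. destruct D as [|D].
  - apply (poly_le_ext _ (fun _ _ => 0)); [intros; rewrite px_poly_le_0; auto; ring|].
    apply poly_le_const.
  - apply (poly_le_mul 2 D); [lia|auto|]. now apply (poly_le_px (S D)).
Qed.

Lemma poly_le_mul_py D f g : poly_le 2 f -> poly_le D g ->
  poly_le (D + 1) (fun x y => f x y * py g x y).
Proof.
  intros Hf Hg. destruct D as [|D].
  - apply (poly_le_ext _ (fun _ _ => 0)); [intros; rewrite py_poly_le_0; auto; ring|].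
    apply poly_le_const.
  - apply (poly_le_mul 2 D); [lia|auto|]. now apply (poly_le_py (S D)).
Qed.

(** * Binary forms *)

Definition form N (u : nat -> R) (t1 t2 : R) : R :=
  sum_f_R0 (fun l => u l * t1 ^ (N - l) * t2 ^ l) N.

Definition mon N (t1 t2 : R) (l : nat) : R := t1 ^ (N - l) * t2 ^ l.

Lemma sum_mult_l c (F : nat -> R) N : sum_f_R0 (fun i => c * F i) N = c * sum_f_R0 F N.
Proof. induction N as [|N IH]; simpl; auto. rewrite IH; ring. Qed.

Lemma sum_mult_r (F : nat -> R) c N : sum_f_R0 F N * c = sum_f_R0 (fun i => F i * c) N.
Proof. induction N as [|N IH]; simpl; auto. rewrite <- IH; ring. Qed.

Lemma sum_swap N M (f : nat -> nat -> R) :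
  sum_f_R0 (fun i => sum_f_R0 (fun j => f i j) M) N =
  sum_f_R0 (fun j => sum_f_R0 (fun i => f i j) N) M.
Proof. induction N as [|N IH]; simpl; auto. rewrite IH, <- sum_plus. reflexivity. Qed.

Lemma poly1_coef_zero M (w : nat -> R) : (forall s, sum_f_R0 (fun l => w l * s ^ l) M = 0) ->
  forall l, (l <= M)%nat -> w l = 0.
Proof.
  revert w. induction M as [|M IH]; intros w H l Hl.
  - replace l with 0%nat by lia. specialize (H 0). simpl in H. lra.
  - assert (H0 : w 0%nat = 0).
    { specialize (H 0). rewrite decomp_sum in H by lia. simpl in H.
      rewrite (sum_eq _ (fun _ => 0)), sum_zero in H by (intros; simpl; ring). lra. }
    (* differentiate the polynomial identity in s *)
    assert (Hd : forall s, sum_f_R0 (fun k => INR (S k) * w (S k) * s ^ k) M = 0).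
    { intros s.
      pose proof (proj2 (is_derive_Reals _ _ _) (derivable_pt_lim_finite_sum w s (S M))) as D.
      apply is_derive_unique in D. cbn [Nat.pred] in D. rewrite <- D.
      rewrite (Derive_ext _ (fun _ => 0)) by auto. apply Derive_const. }
    destruct l as [|l]; auto.
    specialize (IH (fun k => INR (S k) * w (S k)) Hd l ltac:(lia)).
    apply Rmult_integral in IH as [IH|IH]; auto.
    exfalso. exact (not_0_INR (S l) ltac:(lia) IH).
Qed.

Lemma form_inj M (u v : nat -> R) : (forall t1 t2, form M u t1 t2 = form M v t1 t2) ->
  forall l, (l <= M)%nat -> u l = v l.
Proof.
  intros H l Hl. apply Rminus_diag_uniq.
  apply (poly1_coef_zero M (fun l => u l - v l)); auto. intros s.
  specialize (H 1 s). unfold form in H.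
  rewrite (sum_eq _ (fun l => u l * 1 ^ (M - l) * s ^ l - v l * 1 ^ (M - l) * s ^ l))
    by (intros; rewrite pow1; ring).
  rewrite minus_sum. lra.
Qed.

(* [p^T T w] for the tridiagonal matrix [T] with diagonals [al], [be] (above), [ga] (below). *)
Definition tridiag_sum N (p al be ga w : nat -> R) : R :=
  sum_f_R0 (fun j => p j * (al j * w j + be j * w (S j) + ga j * w (pred j))) N.

Lemma tridiag_sum_coord N M p al be ga w : (N <= M)%nat ->
  (forall j, (j <= N)%nat -> (M < S j)%nat -> be j = 0) ->
  tridiag_sum N p al be ga w =
  sum_f_R0 (fun l => tridiag_sum N p al be ga (fun k => delta k l) * w l) M.
Proof.
  intros HNM Hbe. unfold tridiag_sum. symmetry.
  rewrite (sum_eq _ (fun l => sum_f_R0 (fun j =>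
      p j * al j * (delta j l * w l) + p j * be j * (delta (S j) l * w l)
      + p j * ga j * (delta (pred j) l * w l)) N))
    by (intros l _; rewrite sum_mult_r; apply sum_eq; intros; ring).
  rewrite <- sum_swap. apply sum_eq. intros j Hj.
  rewrite !sum_plus, !sum_mult_l, !sum_delta.
  destruct (Nat.leb_spec j M), (Nat.leb_spec (pred j) M); try lia.
  destruct (Nat.leb_spec (S j) M); [ring|]. rewrite (Hbe j); auto; ring.
Qed.

Lemma tridiag_sum_transfer N M (q p al be ga : nat -> R) : (N <= M)%nat ->
  (forall j, (j <= N)%nat -> (M < S j)%nat -> be j = 0) ->
  (forall t1 t2, form M q t1 t2 = tridiag_sum N p al be ga (mon M t1 t2)) ->
  forall w, sum_f_R0 (fun l => q l * w l) M = tridiag_sum N p al be ga w.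
Proof.
  intros HNM Hbe H w. rewrite (tridiag_sum_coord N M); auto.
  apply sum_eq. intros l Hl. f_equal. revert l Hl.
  apply form_inj. intros t1 t2. rewrite H, (tridiag_sum_coord N M); auto.
  apply sum_eq. intros. unfold mon. ring.
Qed.

Lemma linear_mul_form N (p : nat -> R) al be t1 t2 :
  (al * t1 + be * t2) * form N p t1 t2 =
  tridiag_sum N p (fun _ => al) (fun _ => be) (fun _ => 0) (mon (S N) t1 t2).
Proof.
  unfold tridiag_sum, form, mon. rewrite scal_sum. apply sum_eq. intros j Hj.
  rewrite (Nat.sub_succ_l j N Hj). simpl (S N - S j)%nat. simpl. ring.
Qed.

(* The derivative of [u1^k u2^i] when [(u1, u2)] moves with velocity [(du1, du2)]. *)
Definition dpow (k i : nat) (u1 u2 du1 du2 : R) : R :=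
  INR k * du1 * u1 ^ pred k * u2 ^ i + INR i * du2 * u1 ^ k * u2 ^ pred i.

Lemma is_derive_pow2 (f1 f2 : R -> R) s d1 d2 k i :
  is_derive f1 s d1 -> is_derive f2 s d2 ->
  is_derive (fun s => f1 s ^ k * f2 s ^ i) s (dpow k i (f1 s) (f2 s) d1 d2).
Proof.
  intros H1 H2.
  replace (dpow k i (f1 s) (f2 s) d1 d2)
    with (INR k * d1 * f1 s ^ pred k * f2 s ^ i + f1 s ^ k * (INR i * d2 * f2 s ^ pred i))
    by (unfold dpow; ring).
  apply (is_derive_mult (fun s => f1 s ^ k) (fun s => f2 s ^ i));
    apply is_derive_pow; auto.
Qed.

Lemma is_derive_form_coef N (p : nat -> R -> R) (dp : nat -> R) s t1 t2 :
  (forall j, (j <= N)%nat -> is_derive (p j) s (dp j)) ->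
  is_derive (fun s => form N (fun j => p j s) t1 t2) s (form N dp t1 t2).
Proof.
  intros H. apply (is_derive_sum_f_R0 (fun j s => p j s * t1 ^ (N - j) * t2 ^ j)).
  intros j Hj. replace (dp j * t1 ^ (N - j) * t2 ^ j) with (t1 ^ (N - j) * t2 ^ j * dp j) by ring.
  assert (E : forall s, t1 ^ (N - j) * t2 ^ j * p j s = p j s * t1 ^ (N - j) * t2 ^ j)
    by (intros; ring).
  apply (is_derive_ext _ _ _ _ E).
  apply is_derive_scal, H, Hj.
Qed.

Lemma is_derive_form_dir N (p : nat -> R) t1 t2 v1 v2 :
  is_derive (fun e => form N p (t1 + e * v1) (t2 + e * v2)) 0
    (sum_f_R0 (fun j => p j * dpow (N - j) j t1 t2 v1 v2) N).
Proof.
  apply (is_derive_sum_f_R0 (fun j e => p j * (t1 + e * v1) ^ (N - j) * (t2 + e * v2) ^ j)).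
  intros j _.
  assert (E : forall e, p j * ((t1 + e * v1) ^ (N - j) * (t2 + e * v2) ^ j) =
                        p j * (t1 + e * v1) ^ (N - j) * (t2 + e * v2) ^ j) by (intros; ring).
  apply (is_derive_ext _ _ _ _ E), is_derive_scal.
  assert (D : forall t v, is_derive (fun e => t + e * v) 0 v) by (intros; auto_derive; auto; ring).
  pose proof (is_derive_pow2 _ _ 0 v1 v2 (N - j) j (D t1 v1) (D t2 v2)) as H.
  cbv beta in H. rewrite !Rmult_0_l, !Rplus_0_r in H. exact H.
Qed.

(* Row [j] of the matrix, in the basis [mon N], of the derivative of binary forms of
   degree [N] along the linear vector field [t |-> n t]. *)
Definition lie_row N (n : nat -> nat -> R) (w : nat -> R) (j : nat) : R :=
  (INR (N - j) * n 0%nat 0%nat + INR j * n 1%nat 1%nat) * w j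
  + INR (N - j) * n 0%nat 1%nat * w (S j) + INR j * n 1%nat 0%nat * w (pred j).

Lemma dpow_mon_lie_row N n j t1 t2 : (j <= N)%nat ->
  dpow (N - j) j t1 t2 (n 0%nat 0%nat * t1 + n 0%nat 1%nat * t2)
    (n 1%nat 0%nat * t1 + n 1%nat 1%nat * t2) =
  lie_row N n (mon N t1 t2) j.
Proof.
  intros Hj. unfold dpow, lie_row, mon. destruct j as [|j].
  - rewrite Nat.sub_0_r. replace (N - 1)%nat with (pred N) by lia.
    destruct N; simpl; ring.
  - cbn [pred]. replace (N - S (S j))%nat with (pred (N - S j)) by lia.
    replace (N - j)%nat with (S (N - S j)) by lia.
    destruct (N - S j)%nat; simpl pred; simpl pow; rewrite ?INR_0; ring.
Qed.

Lemma dpow_lincomb k i u1 u2 d1 d2 e1 e2 al be :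
  al * dpow k i u1 u2 d1 d2 + be * dpow k i u1 u2 e1 e2 =
  dpow k i u1 u2 (al * d1 + be * e1) (al * d2 + be * e2).
Proof. unfold dpow. ring. Qed.

Lemma is_derive_lincomb (A B : R -> R) s dA dB t1 t2 :
  is_derive A s dA -> is_derive B s dB ->
  is_derive (fun s => A s * t1 + B s * t2) s (dA * t1 + dB * t2).
Proof.
  intros DA DB.
  assert (E : forall s, t1 * A s + t2 * B s = A s * t1 + B s * t2) by (intros; ring).
  apply (is_derive_ext _ _ _ _ E).
  replace (dA * t1 + dB * t2) with (t1 * dA + t2 * dB) by ring.
  apply (is_derive_plus (fun s => t1 * A s) (fun s => t2 * B s)); apply is_derive_scal; auto.
Qed.

Lemma form_pow2_derive N i (A B C : R -> R) (p : nat -> R -> R) dA dB dC dp s t1 t2 :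
  (forall s, (A s * t1 + B s * t2) ^ (N - i) * (B s * t1 + C s * t2) ^ i =
             form N (fun j => p j s) t1 t2) ->
  is_derive A s dA -> is_derive B s dB -> is_derive C s dC ->
  (forall j, (j <= N)%nat -> is_derive (p j) s (dp j)) ->
  form N dp t1 t2 = dpow (N - i) i (A s * t1 + B s * t2) (B s * t1 + C s * t2)
                      (dA * t1 + dB * t2) (dB * t1 + dC * t2).
Proof.
  intros E DA DB DC Dp.
  rewrite <- (is_derive_unique _ _ _ (is_derive_form_coef N p dp s t1 t2 Dp)).
  apply is_derive_unique, (is_derive_ext _ _ _ _ E).
  apply (is_derive_pow2 (fun s => A s * t1 + B s * t2) (fun s => B s * t1 + C s * t2));
    apply is_derive_lincomb; auto.
Qed.

(** * Kronecker powers *)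

Section Kronecker.

Variables a b c : fn2.

Lemma kron2_succ_rows N (P : nat -> nat -> fn2) i x y t1 t2 :
  kron2_spec a b c N P -> (i <= N)%nat ->
  (a x y * t1 + b x y * t2) ^ (S N - i) * (b x y * t1 + c x y * t2) ^ i =
    tridiag_sum N (fun j => P i j x y) (fun _ => a x y) (fun _ => b x y) (fun _ => 0)
      (mon (S N) t1 t2) /\
  (a x y * t1 + b x y * t2) ^ (S N - S i) * (b x y * t1 + c x y * t2) ^ (S i) =
    tridiag_sum N (fun j => P i j x y) (fun _ => b x y) (fun _ => c x y) (fun _ => 0)
      (mon (S N) t1 t2).
Proof.
  intros HP Hi. rewrite <- !linear_mul_form. unfold form. rewrite <- (HP i x y t1 t2 Hi).
  rewrite (Nat.sub_succ_l i N Hi). simpl (S N - S i)%nat. simpl pow. split; ring.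
Qed.

Fixpoint kron (N : nat) : nat -> nat -> fn2 :=
  match N with
  | O => fun _ _ _ _ => 1
  | S N' => fun i l x y =>
      match i with
      | O => tridiag_sum N' (fun j => kron N' O j x y)
               (fun _ => a x y) (fun _ => b x y) (fun _ => 0) (fun k => delta k l)
      | S i' => tridiag_sum N' (fun j => kron N' i' j x y)
               (fun _ => b x y) (fun _ => c x y) (fun _ => 0) (fun k => delta k l)
      end
  end.

Lemma kron_spec N : kron2_spec a b c N (kron N).
Proof.
  induction N as [|N IH]; intros i x y t1 t2 Hi.
  - replace i with 0%nat by lia. simpl. ring.
  - destruct i as [|i];
      [rewrite (proj1 (kron2_succ_rows N (kron N) 0 x y t1 t2 IH ltac:(lia)))
      |rewrite (proj2 (kron2_succ_rows N (kron N) i x y t1 t2 IH ltac:(lia)))];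
      rewrite (tridiag_sum_coord N (S N)) by lia;
      apply sum_eq; intros; unfold mon; cbn [kron]; ring.
Qed.

Lemma kron2_spec_unique N phi : kron2_spec a b c N phi ->
  forall i l x y, (i <= N)%nat -> (l <= N)%nat -> phi i l x y = kron N i l x y.
Proof.
  intros H i l x y Hi Hl. revert l Hl. apply form_inj. intros t1 t2.
  unfold form. rewrite <- H, <- kron_spec; auto.
Qed.

Lemma kron2_succ_row_sums N P Q i x y (w : nat -> R) :
  kron2_spec a b c (S N) Q -> kron2_spec a b c N P -> (i <= N)%nat ->
  sum_f_R0 (fun l => Q i l x y * w l) (S N) =
    tridiag_sum N (fun j => P i j x y) (fun _ => a x y) (fun _ => b x y) (fun _ => 0) w /\
  sum_f_R0 (fun l => Q (S i) l x y * w l) (S N) =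
    tridiag_sum N (fun j => P i j x y) (fun _ => b x y) (fun _ => c x y) (fun _ => 0) w.
Proof.
  intros HQ HP Hi.
  split; apply tridiag_sum_transfer; try (intros; lia); intros t1 t2; unfold form;
    rewrite <- HQ by lia; now apply kron2_succ_rows.
Qed.

Hypotheses (Ha : poly_le 2 a) (Hb : poly_le 2 b) (Hc : poly_le 2 c).

Lemma poly_le_kron N i l : poly_le (2 * N) (kron N i l).
Proof.
  revert i l. induction N as [|N IH]; intros i l.
  - apply poly_le_const.
  - assert (Hrow : forall (f g : fn2) i', poly_le 2 f -> poly_le 2 g ->
      poly_le (2 * S N) (fun x y => tridiag_sum N (fun j => kron N i' j x y)
        (fun _ => f x y) (fun _ => g x y) (fun _ => 0) (fun k => delta k l))).
    { intros f g i' Hf Hg. apply poly_le_sum. intros j _.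
      apply (poly_le_mul (2 * N) 2); [lia|apply IH|].
      repeat apply poly_le_plus; apply (poly_le_mul 2 0); auto using poly_le_const; lia. }
    destruct i; simpl kron; apply Hrow; auto.
Qed.

Lemma kron2_spec_poly N phi i l : kron2_spec a b c N phi -> (i <= N)%nat -> (l <= N)%nat ->
  is_poly (phi i l).
Proof.
  intros H Hi Hl. exists (2 * N)%nat. apply (poly_le_ext _ (kron N i l)).
  - intros. symmetry. now apply kron2_spec_unique.
  - apply poly_le_kron.
Qed.

End Kronecker.

Definition nu (Psi : nat -> nat -> fn2) (al be : fn2) (r s : nat) : fn2 := fun x y =>
  Psi r s x y - (if Nat.eqb r s then px al x y + py be x y else 0).

Section KroneckerDerivatives.

Variables a b c : fn2.
Hypotheses (Ha : poly_le 2 a) (Hb : poly_le 2 b) (Hc : poly_le 2 c).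

Lemma Phi2_derivation (al be : fn2) (Psi : nat -> nat -> fn2) x y :
  is_poly al -> is_poly be ->
  (forall r s : nat, (r <= 1)%nat -> (s <= 1)%nat ->
     px (fmul al (Phi2 a b c r s)) x y + py (fmul be (Phi2 a b c r s)) x y =
     sum_f_R0 (fun t => Phi2 a b c r t x y * Psi t s x y) 1) ->
  forall r s : nat, (r <= 1)%nat -> (s <= 1)%nat ->
    al x y * px (Phi2 a b c r s) x y + be x y * py (Phi2 a b c r s) x y =
    sum_f_R0 (fun t => Phi2 a b c r t x y * nu Psi al be t s x y) 1.
Proof.
  intros Hal Hbe H r s Hr Hs. specialize (H r s Hr Hs).
  assert (HPhi : is_poly (Phi2 a b c r s))
    by (exists 2%nat; destruct r as [|[|]], s as [|[|]]; assumption).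
  rewrite px_mul, py_mul in H by auto using is_poly_ex_derive_x, is_poly_ex_derive_y.
  unfold nu. destruct r as [|[|r]], s as [|[|s]]; try lia; simpl in *; lra.
Qed.

Variables (N : nat) (P : nat -> nat -> fn2).
Hypothesis HP : kron2_spec a b c N P.

Lemma kron2_row_px i x y t1 t2 : (i <= N)%nat ->
  form N (fun j => px (P i j) x y) t1 t2 =
  dpow (N - i) i (a x y * t1 + b x y * t2) (b x y * t1 + c x y * t2)
    (px a x y * t1 + px b x y * t2) (px b x y * t1 + px c x y * t2).
Proof.
  intros Hi. apply (form_pow2_derive N i (fun t => a t y) (fun t => b t y) (fun t => c t y)
    (fun j t => P i j t y)); [intros; now apply HP|..|intros j Hj];
    apply is_derive_px, is_poly_ex_derive_x;
    [exists 2%nat; assumption..|now apply (kron2_spec_poly a b c Ha Hb Hc N)].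
Qed.

Lemma kron2_row_py i x y t1 t2 : (i <= N)%nat ->
  form N (fun j => py (P i j) x y) t1 t2 =
  dpow (N - i) i (a x y * t1 + b x y * t2) (b x y * t1 + c x y * t2)
    (py a x y * t1 + py b x y * t2) (py b x y * t1 + py c x y * t2).
Proof.
  intros Hi. apply (form_pow2_derive N i (fun t => a x t) (fun t => b x t) (fun t => c x t)
    (fun j t => P i j x t)); [intros; now apply HP|..|intros j Hj];
    apply is_derive_py, is_poly_ex_derive_y;
    [exists 2%nat; assumption..|now apply (kron2_spec_poly a b c Ha Hb Hc N)].
Qed.

Lemma kron2_row_dir i x y t1 t2 v1 v2 : (i <= N)%nat ->
  sum_f_R0 (fun j => P i j x y * dpow (N - j) j t1 t2 v1 v2) N =
  dpow (N - i) i (a x y * t1 + b x y * t2) (b x y * t1 + c x y * t2)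
    (a x y * v1 + b x y * v2) (b x y * v1 + c x y * v2).
Proof.
  intros Hi.
  rewrite <- (is_derive_unique _ _ _ (is_derive_form_dir N (fun j => P i j x y) t1 t2 v1 v2)).
  assert (E : forall e, (a x y * (t1 + e * v1) + b x y * (t2 + e * v2)) ^ (N - i) *
                        (b x y * (t1 + e * v1) + c x y * (t2 + e * v2)) ^ i =
                        form N (fun j => P i j x y) (t1 + e * v1) (t2 + e * v2))
    by (intros; now apply HP).
  apply is_derive_unique, (is_derive_ext _ _ _ _ E).
  assert (D : forall p q, is_derive (fun e => p * (t1 + e * v1) + q * (t2 + e * v2)) 0
                                    (p * v1 + q * v2)) by (intros; auto_derive; auto; ring).
  pose proof (is_derive_pow2 _ _ 0 _ _ (N - i) i (D (a x y) (b x y)) (D (b x y) (c x y))) as H.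
  cbv beta in H. rewrite !Rmult_0_l, !Rplus_0_r in H. exact H.
Qed.
Lemma kron2_row_derivation (al be : fn2) (Psi : nat -> nat -> fn2) i x y (w : nat -> R) :
  is_poly al -> is_poly be ->
  (forall r s : nat, (r <= 1)%nat -> (s <= 1)%nat ->
     px (fmul al (Phi2 a b c r s)) x y + py (fmul be (Phi2 a b c r s)) x y =
     sum_f_R0 (fun t => Phi2 a b c r t x y * Psi t s x y) 1) ->
  (i <= N)%nat ->
  sum_f_R0 (fun l => (al x y * px (P i l) x y + be x y * py (P i l) x y) * w l) N =
  sum_f_R0 (fun j => P i j x y * lie_row N (fun r s => nu Psi al be r s x y) w j) N.
Proof.
  intros Hal Hbe H Hi. set (n := fun r s => nu Psi al be r s x y).
  apply (tridiag_sum_transfer N N _ _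
    (fun j => INR (N - j) * n 0%nat 0%nat + INR j * n 1%nat 1%nat)
    (fun j => INR (N - j) * n 0%nat 1%nat) (fun j => INR j * n 1%nat 0%nat)); [lia| |].
  { intros j Hj Hlt. replace (N - j)%nat with 0%nat by lia. simpl. ring. }
  intros t1 t2.
  assert (D := Phi2_derivation al be Psi x y Hal Hbe H).
  pose proof (D 0 0 ltac:(lia) ltac:(lia))%nat as D00.
  pose proof (D 0 1 ltac:(lia) ltac:(lia))%nat as D01.
  pose proof (D 1 0 ltac:(lia) ltac:(lia))%nat as D10.
  pose proof (D 1 1 ltac:(lia) ltac:(lia))%nat as D11.
  simpl in D00, D01, D10, D11.
  pose (v1 := n 0%nat 0%nat * t1 + n 0%nat 1%nat * t2).
  pose (v2 := n 1%nat 0%nat * t1 + n 1%nat 1%nat * t2).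
  transitivity (al x y * form N (fun l => px (P i l) x y) t1 t2
                + be x y * form N (fun l => py (P i l) x y) t1 t2).
  { unfold form. rewrite <- !sum_mult_l, <- sum_plus. apply sum_eq. intros; ring. }
  rewrite kron2_row_px, kron2_row_py, dpow_lincomb by exact Hi.
  transitivity (dpow (N - i) i (a x y * t1 + b x y * t2) (b x y * t1 + c x y * t2)
    (a x y * v1 + b x y * v2) (b x y * v1 + c x y * v2)).
  { f_equal.
    - transitivity ((al x y * px a x y + be x y * py a x y) * t1
                    + (al x y * px b x y + be x y * py b x y) * t2); [ring|].
      rewrite D00, D01. unfold v1, v2, n. ring.
    - transitivity ((al x y * px b x y + be x y * py b x y) * t1
                    + (al x y * px c x y + be x y * py c x y) * t2); [ring|].
      rewrite D10, D11. unfold v1, v2, n. ring. }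
  rewrite <- kron2_row_dir by exact Hi. apply sum_eq. intros j Hj.
  unfold v1, v2. now rewrite dpow_mon_lie_row.
Qed.

End KroneckerDerivatives.

(** * Symmetry factors *)

Definition affine (p q r : R) : fn2 := fun x y => p * x + q * y + r.

Lemma px_affine p q r : px (affine p q r) = fun _ _ => p.
Proof.
  do 2 (apply functional_extensionality; intro). unfold px, affine.
  apply is_derive_unique. auto_derive; auto; ring.
Qed.

Lemma py_affine p q r : py (affine p q r) = fun _ _ => q.
Proof.
  do 2 (apply functional_extensionality; intro). unfold py, affine.
  apply is_derive_unique. auto_derive; auto; ring.
Qed.

Lemma is_poly_affine p q r : is_poly (affine p q r).
Proof.
  exists 1%nat. exists [(p, 1, 0); (q, 0, 1); (r, 0, 0)]%nat.
  split; [repeat constructor; simpl; lia|]. intros; unfold affine; simpl; ring.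
Qed.

Section AffineFactor.

Variable U : R * R -> Prop.
Hypothesis HU : open U.
Variables (G : fn2) (p q r : R).
Hypothesis HG : Ck_on 2 U G.

Let l := affine p q r.

Lemma px_mul_affine x y : U (x, y) -> px (fmul G l) x y = px G x y * l x y + p * G x y.
Proof.
  intros Hxy. destruct (Ck_on_partials 1 U G x y HG Hxy).
  rewrite px_mul; [|assumption|apply is_poly_ex_derive_x, is_poly_affine].
  unfold l. rewrite px_affine. ring.
Qed.

Lemma py_mul_affine x y : U (x, y) -> py (fmul G l) x y = py G x y * l x y + q * G x y.
Proof.
  intros Hxy. destruct (Ck_on_partials 1 U G x y HG Hxy).
  rewrite py_mul; [|assumption|apply is_poly_ex_derive_y, is_poly_affine].
  unfold l. rewrite py_affine. ring.
Qed.

Lemma pxx_mul_affine x y : U (x, y) ->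
  px (px (fmul G l)) x y = px (px G) x y * l x y + 2 * p * px G x y.
Proof.
  intros Hxy. destruct (Ck_on_partials 1 U G x y HG Hxy) as [Gx _].
  destruct (Ck_on_partials 0 U (px G) x y (Ck_on_px 1 U G HG) Hxy) as [Gxx _].
  rewrite (px_ext_on U HU _ (fun u v => px G u v * l u v + p * G u v));
    [|intros; apply px_mul_affine; auto|exact Hxy].
  apply is_derive_unique. unfold l, affine. auto_derive; auto. unfold px, py. ring.
Qed.

Lemma pxy_mul_affine x y : U (x, y) ->
  px (py (fmul G l)) x y = px (py G) x y * l x y + p * py G x y + q * px G x y.
Proof.
  intros Hxy. destruct (Ck_on_partials 1 U G x y HG Hxy) as [Gx _].
  destruct (Ck_on_partials 0 U (py G) x y (Ck_on_py 1 U G HG) Hxy) as [Gyx _].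
  rewrite (px_ext_on U HU _ (fun u v => py G u v * l u v + q * G u v));
    [|intros; apply py_mul_affine; auto|exact Hxy].
  apply is_derive_unique. unfold l, affine. auto_derive; auto. unfold px, py. ring.
Qed.

Lemma pyy_mul_affine x y : U (x, y) ->
  py (py (fmul G l)) x y = py (py G) x y * l x y + 2 * q * py G x y.
Proof.
  intros Hxy. destruct (Ck_on_partials 1 U G x y HG Hxy) as [_ Gy].
  destruct (Ck_on_partials 0 U (py G) x y (Ck_on_py 1 U G HG) Hxy) as [_ Gyy].
  rewrite (py_ext_on U HU _ (fun u v => py G u v * l u v + q * G u v));
    [|intros; apply py_mul_affine; auto|exact Hxy].
  apply is_derive_unique. unfold l, affine. auto_derive; auto. unfold px, py. ring.
Qed.

End AffineFactor.

Lemma fmul_assoc f g h : fmul f (fmul g h) = fmul (fmul f g) h.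
Proof. do 2 (apply functional_extensionality; intro). unfold fmul. ring. Qed.

Lemma Lop_affine a b c d e p q r x y : Lop a b c d e (affine p q r) x y = d x y * p + e x y * q.
Proof. unfold Lop. rewrite px_affine, py_affine, !px_const, !py_const. ring. Qed.

Section SymmetryFactor.

Variables (a b c d e omega : fn2) (U : R * R -> Prop).
Hypotheses (Ha : is_poly a) (Hb : is_poly b) (Hc : is_poly c) (Hd : is_poly d) (He : is_poly e).
Hypothesis Hsym : symmetry_factor a b c d e U omega.

Lemma symmetry_factor_affine_test p q r x y : U (x, y) ->
  affine p q r x y * (px (px (fmul a omega)) x y + 2 * px (py (fmul b omega)) x y
    + py (py (fmul c omega)) x y - px (fmul d omega) x y - py (fmul e omega) x y)
  + 2 * p * (px (fmul a omega) x y + py (fmul b omega) x y - d x y * omega x y)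
  + 2 * q * (px (fmul b omega) x y + py (fmul c omega) x y - e x y * omega x y) = 0.
Proof.
  intros Hxy. destruct Hsym as [HU [Hw [_ Hid]]].
  assert (HC2 : forall f, is_poly f -> Ck_on 2 U (fmul f omega))
    by (intros; apply Ck_on_mul; auto using Ck_on_poly).
  pose proof (Hid (affine p q r) (fun k => Ck_on_poly k U _ (is_poly_affine p q r)) x y Hxy) as E.
  rewrite Lop_affine, !fmul_assoc in E.
  rewrite (pxx_mul_affine U HU _ p q r (HC2 a Ha)), (pxy_mul_affine U HU _ p q r (HC2 b Hb)),
    (pyy_mul_affine U HU _ p q r (HC2 c Hc)), (px_mul_affine U _ p q r (HC2 d Hd)),
    (py_mul_affine U _ p q r (HC2 e He)) in E by exact Hxy.
  unfold fmul in E |- *. lra.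
Qed.

Lemma symmetry_factor_divergence x y : U (x, y) ->
  px (fmul a omega) x y + py (fmul b omega) x y = d x y * omega x y /\
  px (fmul b omega) x y + py (fmul c omega) x y = e x y * omega x y.
Proof.
  intros Hxy.
  pose proof (symmetry_factor_affine_test 0 0 1 x y Hxy) as T0.
  pose proof (symmetry_factor_affine_test 1 0 0 x y Hxy) as Tx.
  pose proof (symmetry_factor_affine_test 0 1 0 x y Hxy) as Ty.
  unfold affine in T0, Tx, Ty. split; nra.
Qed.

End SymmetryFactor.

(** * The reduction step *)

(* Row [j] of the column [A_{n-1}] built from a column [Ah] of [A_n]. *)
Definition reduce_col (a b c d e : fn2) (Psi0 Psi1 : nat -> nat -> fn2) (N : nat)
  (Ah : nat -> fn2) (j : nat) : fn2 := fun x y =>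
  d x y * Ah j x y + e x y * Ah (S j) x y
  + a x y * px (Ah j) x y + b x y * px (Ah (S j)) x y
  + b x y * py (Ah j) x y + c x y * py (Ah (S j)) x y
  + lie_row N (fun r s => nu Psi0 a b r s x y) (fun l => Ah l x y) j
  + lie_row N (fun r s => nu Psi1 b c r s x y) (fun l => Ah (S l) x y) j.

(* Column [k] of [A], extended by zero below row [N]: [reduce_col] reads rows beyond [N],
   where [A] is arbitrary. *)
Definition col_pad (N : nat) (A : nat -> nat -> fn2) (k l : nat) : fn2 :=
  if Nat.leb l N then A l k else fun _ _ => 0.

Lemma poly_le_col_pad N D A k : (forall l, (l <= N)%nat -> poly_le D (A l k)) ->
  forall l, poly_le D (col_pad N A k l).
Proof.
  intros HA l. unfold col_pad. destruct (Nat.leb_spec l N); auto using poly_le_const.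
Qed.

Lemma Ck_on_matPAw k U n phi A omega i kk : open U ->
  (forall j, (j <= n)%nat -> is_poly (phi i j) /\ is_poly (A j kk)) -> Ck_on k U omega ->
  Ck_on k U (matPAw n phi A omega i kk).
Proof.
  intros HU HpA Hw. apply (Ck_on_mul U HU); auto. apply (Ck_on_sum U HU). intros j Hj.
  destruct (HpA j Hj). apply (Ck_on_mul U HU); now apply Ck_on_poly.
Qed.

Lemma poly_le_nu (Psi : nat -> nat -> fn2) al be r s : poly_le 1 (Psi r s) ->
  poly_le 2 al -> poly_le 2 be -> poly_le 1 (nu Psi al be r s).
Proof.
  intros HPsi Hal Hbe.
  apply (poly_le_ext _ (fplus (Psi r s)
    (fmul (fun _ _ => if Nat.eqb r s then -1 else 0) (fplus (px al) (py be))))).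
  { intros. unfold nu, fplus, fmul. destruct (Nat.eqb r s); ring. }
  apply poly_le_plus; auto. apply (poly_le_mul 0 1); [lia|apply poly_le_const|].
  apply poly_le_plus; [apply (poly_le_px 2)|apply (poly_le_py 2)]; auto.
Qed.

Lemma poly_le_lie_row N D (n : nat -> nat -> fn2) (w : nat -> fn2) j :
  (forall r s, (r <= 1)%nat -> (s <= 1)%nat -> poly_le 1 (n r s)) ->
  (forall l, poly_le D (w l)) ->
  poly_le (D + 1) (fun x y => lie_row N (fun r s => n r s x y) (fun l => w l x y) j).
Proof.
  intros Hn Hw. unfold lie_row.
  assert (Hk : forall (k : R) r s, (r <= 1)%nat -> (s <= 1)%nat ->
                 poly_le 1 (fun x y => k * n r s x y))
    by (intros; apply (poly_le_mul 0 1); auto using poly_le_const).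
  repeat apply poly_le_plus; apply (poly_le_mul 1 D); try lia; auto;
    try apply poly_le_plus; apply Hk; lia.
Qed.

Lemma poly_le_reduce_col a b c d e Psi0 Psi1 N D (Ah : nat -> fn2) j :
  poly_le 2 a -> poly_le 2 b -> poly_le 2 c -> poly_le 1 d -> poly_le 1 e ->
  (forall r s, (r <= 1)%nat -> (s <= 1)%nat -> poly_le 1 (Psi0 r s) /\ poly_le 1 (Psi1 r s)) ->
  (forall l, poly_le D (Ah l)) ->
  poly_le (D + 1) (reduce_col a b c d e Psi0 Psi1 N Ah j).
Proof.
  intros Ha Hb Hc Hd He HPsi HAh. unfold reduce_col.
  apply poly_le_plus; [apply poly_le_plus; [repeat apply poly_le_plus|]|].
  1-2: apply (poly_le_mul 1 D); auto; lia.
  1-2: apply poly_le_mul_px; auto.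
  1-2: apply poly_le_mul_py; auto.
  all: apply (poly_le_lie_row N D (fun r s => nu _ _ _ r s)); auto;
    intros r s Hr Hs; apply poly_le_nu; auto; apply HPsi; auto.
Qed.

Section Reduction.

Variables (a b c d e omega : fn2) (Psi0 Psi1 : nat -> nat -> fn2).
Hypotheses (Ha : poly_le 2 a) (Hb : poly_le 2 b) (Hc : poly_le 2 c).
Hypothesis H0 : forall (r s : nat) (x y : R), (r <= 1)%nat -> (s <= 1)%nat ->
  px (fmul a (Phi2 a b c r s)) x y + py (fmul b (Phi2 a b c r s)) x y =
  sum_f_R0 (fun t => Phi2 a b c r t x y * Psi0 t s x y) 1.
Hypothesis H1 : forall (r s : nat) (x y : R), (r <= 1)%nat -> (s <= 1)%nat ->
  px (fmul b (Phi2 a b c r s)) x y + py (fmul c (Phi2 a b c r s)) x y =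
  sum_f_R0 (fun t => Phi2 a b c r t x y * Psi1 t s x y) 1.
Variables (N : nat) (P Q : nat -> nat -> fn2).
Hypotheses (HP : kron2_spec a b c N P) (HQ : kron2_spec a b c (S N) Q).

Lemma div_rows_reduce i (Ah : nat -> fn2) x y : (i <= N)%nat ->
  (forall l, is_poly (Ah l)) -> pdiff_at omega x y ->
  px (fmul a omega) x y + py (fmul b omega) x y = d x y * omega x y ->
  px (fmul b omega) x y + py (fmul c omega) x y = e x y * omega x y ->
  px (fun x y => sum_f_R0 (fun l => Q i l x y * Ah l x y) (S N) * omega x y) x y
  + py (fun x y => sum_f_R0 (fun l => Q (S i) l x y * Ah l x y) (S N) * omega x y) x y =
  sum_f_R0 (fun j => P i j x y * reduce_col a b c d e Psi0 Psi1 N Ah j x y) N * omega x y.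
Proof.
  intros Hi HAh Hw R1 R2.
  assert (Pa : is_poly a) by now exists 2%nat.
  assert (Pb : is_poly b) by now exists 2%nat.
  assert (Pc : is_poly c) by now exists 2%nat.
  rewrite (px_ext _ (fun x y => sum_f_R0 (fun j =>
    P i j x y * ((a x y * Ah j x y + b x y * Ah (S j) x y) * omega x y)) N)).
  2:{ intros u v.
      rewrite (proj1 (kron2_succ_row_sums a b c N P Q i u v (fun l => Ah l u v) HQ HP Hi)).
      unfold tridiag_sum. rewrite sum_mult_r. apply sum_eq. intros; ring. }
  rewrite (py_ext _ (fun x y => sum_f_R0 (fun j =>
    P i j x y * ((b x y * Ah j x y + c x y * Ah (S j) x y) * omega x y)) N)).
  2:{ intros u v.
      rewrite (proj2 (kron2_succ_row_sums a b c N P Q i u v (fun l => Ah l u v) HQ HP Hi)).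
      unfold tridiag_sum. rewrite sum_mult_r. apply sum_eq. intros; ring. }
  rewrite div_sum_mul.
  2:{ intros j Hj. split; [|split];
      [apply is_poly_pdiff_at, (kron2_spec_poly a b c Ha Hb Hc N); auto| |];
      apply pdiff_at_mul; auto;
      apply pdiff_at_plus; apply pdiff_at_mul; auto using is_poly_pdiff_at. }
  rewrite (sum_eq _ (fun j =>
    omega x y * ((a x y * px (P i j) x y + b x y * py (P i j) x y) * Ah j x y)
    + omega x y * ((b x y * px (P i j) x y + c x y * py (P i j) x y) * Ah (S j) x y)
    + P i j x y * omega x y * (d x y * Ah j x y + e x y * Ah (S j) x y
        + a x y * px (Ah j) x y + b x y * px (Ah (S j)) x y
        + b x y * py (Ah j) x y + c x y * py (Ah (S j)) x y))).
  2:{ intros j Hj. rewrite div_weighted_pair by auto using is_poly_pdiff_at.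
      rewrite R1, R2. ring. }
  rewrite !sum_plus, !sum_mult_l.
  rewrite (kron2_row_derivation a b c Ha Hb Hc N P HP a b Psi0 i x y (fun l => Ah l x y));
    auto using H0.
  rewrite (kron2_row_derivation a b c Ha Hb Hc N P HP b c Psi1 i x y (fun l => Ah (S l) x y));
    auto using H1.
  rewrite sum_mult_r, <- !sum_mult_l, <- !sum_plus. apply sum_eq. intros j _.
  unfold reduce_col. ring.
Qed.

Variable U : R * R -> Prop.
Hypotheses (Hd : poly_le 1 d) (He : poly_le 1 e) (Hsym : symmetry_factor a b c d e U omega).

Lemma div_matPAw_reduce D A k i x y : (forall l, (l <= S N)%nat -> poly_le D (A l k)) ->
  (i <= N)%nat -> U (x, y) -> pdiff_at omega x y ->
  px (matPAw (S N) Q A omega i k) x y + py (matPAw (S N) Q A omega (S i) k) x y =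
  matPAw N P (fun j k => reduce_col a b c d e Psi0 Psi1 N (col_pad (S N) A k) j) omega i k x y.
Proof.
  intros HA Hi Hxy Hw. unfold matPAw.
  assert (Epad : forall i' u v, sum_f_R0 (fun l => Q i' l u v * A l k u v) (S N) =
                   sum_f_R0 (fun l => Q i' l u v * col_pad (S N) A k l u v) (S N)).
  { intros. apply sum_eq. intros l Hl. unfold col_pad.
    destruct (Nat.leb_spec l (S N)); [reflexivity|lia]. }
  rewrite (px_ext _ (fun u v => sum_f_R0 (fun l => Q i l u v * col_pad (S N) A k l u v) (S N)
    * omega u v)) by (intros; now rewrite Epad).
  rewrite (py_ext _ (fun u v => sum_f_R0 (fun l => Q (S i) l u v * col_pad (S N) A k l u v) (S N)
    * omega u v)) by (intros; now rewrite Epad).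
  destruct (symmetry_factor_divergence a b c d e omega U (ex_intro _ 2%nat Ha)
    (ex_intro _ 2%nat Hb) (ex_intro _ 2%nat Hc) (ex_intro _ 1%nat Hd) (ex_intro _ 1%nat He)
    Hsym x y Hxy) as [R1 R2].
  apply div_rows_reduce; auto. intros l. exists D. now apply poly_le_col_pad.
Qed.

End Reduction.

Theorem lemma7p2 (a b c d e omega : R -> R -> R) (U : R * R -> Prop)
  (Psi0 Psi1 : nat -> nat -> R -> R -> R) (n m D : nat)
  (Phin Phin1 A : nat -> nat -> R -> R -> R) :
  is_poly_le 2 a -> is_poly_le 2 b -> is_poly_le 2 c ->
  is_poly_le 1 d -> is_poly_le 1 e ->
  symmetry_factor a b c d e U omega ->
  (forall r s : nat, (r <= 1)%nat -> (s <= 1)%nat ->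
     is_poly_le 1 (Psi0 r s) /\ is_poly_le 1 (Psi1 r s)) ->
  (forall (r s : nat) (x y : R), (r <= 1)%nat -> (s <= 1)%nat ->
     px (fmul a (Phi2 a b c r s)) x y + py (fmul b (Phi2 a b c r s)) x y =
     sum_f_R0 (fun t => Phi2 a b c r t x y * Psi0 t s x y) 1) ->
  (forall (r s : nat) (x y : R), (r <= 1)%nat -> (s <= 1)%nat ->
     px (fmul b (Phi2 a b c r s)) x y + py (fmul c (Phi2 a b c r s)) x y =
     sum_f_R0 (fun t => Phi2 a b c r t x y * Psi1 t s x y) 1) ->
  (1 <= n)%nat ->
  Ck_on n U omega ->
  kron2_spec a b c n Phin ->
  kron2_spec a b c (n - 1) Phin1 ->
  (forall i j : nat, (i <= n)%nat -> (j <= m)%nat -> is_poly_le D (A i j)) ->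
  exists A' : nat -> nat -> R -> R -> R,
    (forall i j : nat, (i <= n - 1)%nat -> (j <= m)%nat -> is_poly_le (D + 1) (A' i j)) /\
    (forall (k : nat) (x y : R), (k <= m)%nat -> U (x, y) ->
       divn n (fun i => matPAw n Phin A omega i k) x y =
       divn (n - 1) (fun i => matPAw (n - 1) Phin1 A' omega i k) x y).
Proof.
  intros Ha Hb Hc Hd He Hsym HPsi H0 H1 Hn Hw HQ HP HA.
  destruct n as [|N]; [lia|]. replace (S N - 1)%nat with N in * by lia.
  apply poly_le_of_is_poly_le in Ha, Hb, Hc, Hd, He.
  assert (HAk : forall k, (k <= m)%nat -> forall l, (l <= S N)%nat -> poly_le D (A l k))
    by (intros; now apply poly_le_of_is_poly_le, HA).
  exists (fun j k => reduce_col a b c d e Psi0 Psi1 N (col_pad (S N) A k) j). split.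
  - intros j k Hj Hk. apply is_poly_le_of_poly_le, poly_le_reduce_col; auto.
    + intros r s Hr Hs. destruct (HPsi r s Hr Hs). split; now apply poly_le_of_is_poly_le.
    + now apply poly_le_col_pad, HAk.
  - intros k x y Hk Hxy. apply (divn_succ N U); [apply Hsym| | |exact Hxy].
    + intros i Hi. apply Ck_on_matPAw; [apply Hsym| |exact Hw]. intros j Hj. split.
      * now apply (kron2_spec_poly a b c Ha Hb Hc (S N)).
      * exists D. now apply HAk.
    + intros i u v Hi Huv. symmetry.
      apply (div_matPAw_reduce a b c d e omega Psi0 Psi1 Ha Hb Hc H0 H1 N Phin1 Phin HP HQ U
        Hd He Hsym D); auto.
      exact (Ck_on_partials N U omega u v Hw Huv).
Qed.
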